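(* Fix a real $\varepsilon\in(0,1/2]$. Let $\mathcal C\subseteq F^n$ be a (not necessarily linear) code with rate $R=(\log_q|\mathcal C|)/n\in[\varepsilon,1-\varepsilon]$, let $L\in\mathbb Z^+$ satisfy $$L<\frac{1}{\sqrt{2n}}\,2^{\eta_q(\varepsilon)\,n},$$ and let $\tau\in\mathbb Z_{\ge0}$ satisfy $\tau\ge \frac{L n(1-R)}{L+1}$. If $\mathcal C$ is $(\tau,L)$-list decodable, then $L<q-1$.
   Context: $F=\mathrm{GF}(q)$. For $L\in\mathbb Z^+$ and $\tau\in\mathbb Z_{\ge0}$, a code $\mathcal C\subseteq F^n$ is $(\tau,L)$-list decodable if for every $y\in F^n$ at most $L$ codewords of $\mathcal C$ lie at Hamming distance at most $\tau$ from $y$. With $\mathsf h(x)=-x\log_2x-(1-x)\log_2(1-x)$ the binary entropy function, define for $\varepsilon\in[0,1/2]$: $\eta_q(\varepsilon)=\mathsf h\!\left(\frac{q-1}{q}(1-\varepsilon)\right)-(1-\varepsilon)\,\mathsf h(1/q)$. *)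

From mathcomp Require Import all_boot all_algebra.
From Stdlib Require Import Reals.
Open Scope R_scope.

Set Implicit Arguments.
Unset Strict Implicit.
Unset Printing Implicit Defensive.

Definition hamming (F : finFieldType) (n : nat) (x y : 'rV[F]_n) : nat :=
  #|[set i : 'I_n | x ord0 i != y ord0 i]|.

Definition list_decodable (F : finFieldType) (n : nat)
    (C : {set 'rV[F]_n}) (tau L : nat) : Prop :=
  forall y : 'rV[F]_n, (#|[set c in C | (hamming c y <= tau)%nat]| <= L)%nat.

Definition log2 (x : R) : R := Rdiv (ln x) (ln 2).

Definition h2 (x : R) : R :=
  Rminus (Ropp (Rmult x (log2 x))) (Rmult (Rminus 1 x) (log2 (Rminus 1 x))).

Definition eta_q (q : nat) (eps : R) : R :=
  Rminus (h2 (Rmult (Rdiv (INR q - 1) (INR q)) (Rminus 1 eps)))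
         (Rmult (Rminus 1 eps) (h2 (Rinv (INR q)))).

Definition rate (F : finFieldType) (n : nat) (C : {set 'rV[F]_n}) : R :=
  Rdiv (Rdiv (ln (INR #|C|)) (ln (INR #|F|))) (INR n).

(* Suppose [L >= q - 1] and put [a = (q - 1) / q], so that [L / (L + 1) >= a] and
   [tau >= a (1 - R) n].  Counting the pairs (codeword, word) at distance at most
   [tau] gives [|C| V(k) <= L q^n] for the volume [V(k)] of every Hamming ball of
   radius [k <= tau].  If some integer [k <= tau] lies in [[a (1 - R) n, a n]],
   Stirling's bounds give [ln V(k) >= n H_q(k / n) ln q - ln (2 n) / 2]; as [H_q]
   increases up to [a], this is at least [n ((1 - R) ln q + eta_q(R) ln 2) - ln (2 n) / 2],
   and [eta_q(R) >= eta_q(eps)] because [eta_q] is concave with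
   [eta_q(1 - eps) >= eta_q(eps)].  Hence [L >= 2^(eta_q(eps) n) / sqrt (2 n)],
   contradicting the hypothesis on [L].  Otherwise [a R n < 1]; then the bound on
   [L] together with [L >= q - 1] forces [q <= 3] and [n <= 7], and these finitely
   many cases are checked by computation. *)

From mathcomp Require Import all_boot all_algebra zify.
From Stdlib Require Import Reals Lra Psatz.
From Coquelicot Require Import Coquelicot.
Open Scope R_scope.

Lemma INR_subn (m n : nat) : (n <= m)%nat -> INR (m - n)%nat = INR m - INR n.
Proof. by move=> /leP; rewrite -minusE; apply: minus_INR. Qed.

Lemma INR_muln (m n : nat) : INR (m * n)%nat = INR m * INR n.
Proof. by rewrite -multE mult_INR. Qed.

Lemma INR_expn (m n : nat) : INR (expn m n) = INR m ^ n.
Proof. by elim: n => [|n IHn] //; rewrite expnS INR_muln IHn. Qed.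

Lemma INR_gt0 (n : nat) : (0 < n)%nat -> 0 < INR n.
Proof. by move=> /ltP; apply: lt_0_INR. Qed.

Lemma leq_INR (m n : nat) : (m <= n)%nat -> INR m <= INR n.
Proof. by move=> /leP; apply: le_INR. Qed.

Lemma INR_ltn (m n : nat) : INR m < INR n -> (m < n)%nat.
Proof. by move=> /INR_lt /ltP. Qed.

Lemma ln_le_sub1 x : 0 < x -> ln x <= x - 1.
Proof. by move=> x_gt0; have := exp_ineq1_le (ln x); rewrite exp_ln //; lra. Qed.

Lemma mul_ln_div_le x p : 0 <= x -> 0 < p -> x * (ln p - ln x) <= p - x.
Proof.
move=> x_ge0 p_gt0; case: (Rle_lt_or_eq_dec _ _ x_ge0) => [x_gt0|<-]; last lra.
rewrite -ln_div //.
have := Rmult_le_compat_l x _ _ x_ge0 (ln_le_sub1 (p / x) (Rdiv_lt_0_compat _ _ p_gt0 x_gt0)).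
by have -> : x * (p / x - 1) = p - x by field; lra.
Qed.

Lemma ln_sqrt x : 0 < x -> ln (sqrt x) = / 2 * ln x.
Proof. by move=> x_gt0; rewrite -Rpower_sqrt // ln_Rpower. Qed.

Lemma le_of_derive_ge0 (f df : R -> R) (a b : R) :
  a <= b ->
  (forall x, a <= x <= b -> is_derive f x (df x)) ->
  (forall x, a <= x <= b -> 0 <= df x) -> f a <= f b.
Proof.
move=> a_le_b f_df df_ge0.
have minab : Rmin a b = a by apply: Rmin_left.
have maxab : Rmax a b = b by apply: Rmax_right.
have [c [c_ab mvt]] : exists c, Rmin a b <= c <= Rmax a b /\ f b - f a = df c * (b - a).
{ apply: MVT_gen; rewrite minab maxab => x x_ab.
  - by apply: f_df; lra.
  - apply/continuity_pt_filterlim.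
    apply: (ex_derive_continuous (K:=R_AbsRing) (V:=R_NormedModule)).
    by exists (df x); apply: f_df. }
have : 0 <= df c * (b - a) by apply: Rmult_le_pos; [apply: df_ge0|]; lra.
lra.
Qed.

Lemma ge0_of_forall_mul_le (x c e : R) :
  0 < e -> (forall t, 0 < t <= e -> t * c <= x) -> 0 <= x.
Proof.
move=> e_gt0 tc_le_x; apply: Rnot_lt_le => x_lt0.
have c1 : 0 < Rabs c + 1 by have := Rabs_pos c; lra.
set t := Rmin e (- x / (2 * (Rabs c + 1))).
have t_gt0 : 0 < t by apply: Rmin_pos; last apply: Rdiv_lt_0_compat; lra.
have t_le : t <= - x / (2 * (Rabs c + 1)) by apply: Rmin_r.
have := tc_le_x t (conj t_gt0 (Rmin_l _ _)).
have : - (t * Rabs c) <= t * c.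
{ by have := Rle_abs (- c); rewrite Rabs_Ropp; nra. }
have : t * (2 * (Rabs c + 1)) <= - x.
{ have := Rmult_le_compat_r (2 * (Rabs c + 1)) _ _ ltac:(lra) t_le.
  by rewrite /Rdiv Rmult_assoc Rinv_l; lra. }
by have := Rabs_pos c; nra.
Qed.

Lemma convex_comb_in01 l x y : 0 <= l <= 1 -> 0 < x < 1 -> 0 < y < 1 ->
  0 < l * x + (1 - l) * y < 1.
Proof.
have pos u v : 0 < u < 1 -> 0 < v < 1 -> 0 <= l <= 1 -> 0 < l * u + (1 - l) * v.
{ move=> u01 v01 l01.
  have : 0 <= l * u * (1 - v) by apply: Rmult_le_pos; nra.
  have : 0 <= (1 - l) * v * (1 - u) by apply: Rmult_le_pos; nra.
  have : 0 < u * v by nra.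
  nra. }
move=> l01 x01 y01.
have := pos (1 - x) (1 - y) ltac:(lra) ltac:(lra) l01.
have := pos x y x01 y01 l01.
lra.
Qed.

(** * Stirling-type bounds *)

Lemma ln_ratio_lower y : 0 <= y < 1 -> 2 * y + 2 / 3 * y ^ 3 <= ln (1 + y) - ln (1 - y).
Proof.
move=> y01.
pose f t := ln (1 + t) - ln (1 - t) - (2 * t + 2 / 3 * t ^ 3).
have : f 0 <= f y.
{ apply: (le_of_derive_ge0 f (fun t => 2 * t ^ 4 / (1 - t ^ 2))); first lra.
  - move=> x x0y; rewrite /f; auto_derive; first by repeat split; lra.
    by field; repeat split; nra.
  - by move=> x x0y; apply: Rdiv_le_0_compat; nra. }
by rewrite /f Rplus_0_r Rminus_0_r ln_1; lra.
Qed.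

Lemma ln_ratio_upper y : 0 <= y < 1 ->
  ln (1 + y) - ln (1 - y) <= 2 * y + 2 / 3 * y ^ 3 / (1 - y ^ 2).
Proof.
move=> y01.
pose f t := 2 * t + 2 / 3 * t ^ 3 / (1 - t ^ 2) - (ln (1 + t) - ln (1 - t)).
have : f 0 <= f y.
{ apply: (le_of_derive_ge0 f (fun t => 4 / 3 * t ^ 4 / (1 - t ^ 2) ^ 2)); first lra.
  - move=> x x0y; rewrite /f; auto_derive; first by repeat split; nra.
    by field; repeat split; nra.
  - by move=> x x0y; apply: Rdiv_le_0_compat; [nra|apply: pow_lt; nra]. }
rewrite /f Rplus_0_r Rminus_0_r ln_1.
have -> : 2 * 0 + 2 / 3 * 0 ^ 3 / (1 - 0 ^ 2) - (0 - 0) = 0 by field.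
lra.
Qed.

Lemma ln2_ge : 37 / 54 <= ln 2.
Proof.
have := ln_ratio_lower (1 / 3) ltac:(lra).
rewrite -ln_div; try lra.
have -> : (1 + 1 / 3) / (1 - 1 / 3) = 2 by field.
lra.
Qed.

Lemma ln_succ_bounds (m : nat) : (0 < m)%nat ->
  1 <= (INR m + / 2) * (ln (INR m + 1) - ln (INR m)) <=
       1 + / 12 * (/ INR m - / (INR m + 1)).
Proof.
move=> /INR_gt0 m_gt0.
set y := / (2 * INR m + 1).
have y01 : 0 <= y < 1.
{ rewrite /y; split; first by apply/Rlt_le/Rinv_0_lt_compat; lra.
  by rewrite -Rinv_1; apply: Rinv_lt_contravar; lra. }
have ln_y : ln (1 + y) - ln (1 - y) = ln (INR m + 1) - ln (INR m).
{ by rewrite -!ln_div; try lra; congr ln; rewrite /y; field; lra. }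
have lower := ln_ratio_lower y y01; have upper := ln_ratio_upper y y01.
rewrite ln_y in lower upper.
have lin : (INR m + / 2) * (2 * y) = 1 by rewrite /y; field; lra.
have cubic : (INR m + / 2) * (2 / 3 * y ^ 3 / (1 - y ^ 2)) =
             / 12 * (/ INR m - / (INR m + 1)).
{ by rewrite /y; field; repeat split; nra. }
split.
- have := Rmult_le_compat_l (INR m + / 2) _ _ ltac:(lra) lower.
  have : 0 <= (INR m + / 2) * (2 / 3 * y ^ 3) by apply: Rmult_le_pos; nra.
  nra.
- have := Rmult_le_compat_l (INR m + / 2) _ _ ltac:(lra) upper.
  by rewrite Rmult_plus_distr_l lin cubic.
Qed.

(* Stirling's formula without its constant: [stirling_err m] increases to
   [1 - ln (sqrt (2 * PI))]. *)
Definition stirling_err (m : nat) : R :=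
  INR m * ln (INR m) - INR m + / 2 * ln (INR m) - ln (INR m`!).

Lemma stirling_err_succ m :
  stirling_err m.+1 - stirling_err m =
  (INR m + / 2) * (ln (INR m + 1) - ln (INR m)) - 1.
Proof.
rewrite /stirling_err factS INR_muln ln_mult.
- by rewrite S_INR; ring.
- exact: INR_gt0.
- by apply: INR_gt0; apply: fact_gt0.
Qed.

Lemma stirling_err_nondecr m p : (0 < m)%nat -> (m <= p)%nat ->
  stirling_err m <= stirling_err p.
Proof.
move=> m_gt0 /subnKC <-; elim: (p - m)%nat => [|d IHd]; first by rewrite addn0; lra.
have md_gt0 : (0 < m + d)%nat by rewrite addn_gt0 m_gt0.
rewrite addnS; have := stirling_err_succ (m + d).
by have [] := ln_succ_bounds _ md_gt0; lra.
Qed.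

Lemma stirling_err1 : stirling_err 1 = -1.
Proof. by rewrite /stirling_err /= Rmult_1_l !ln_1; ring. Qed.

Lemma stirling_err2 : stirling_err 2 = 3 / 2 * ln 2 - 2.
Proof.
rewrite /stirling_err /=.
by replace (1 + 1) with 2 by ring; replace (INR (2 * 1)) with 2 by (simpl; ring); lra.
Qed.

Lemma stirling_err_le n : (0 < n)%nat -> stirling_err n <= - 1 + / 12 - / 12 * / INR n.
Proof.
elim: n => [//|n IHn] _; case: (posnP n) => [->|n_gt0].
  by rewrite stirling_err1 /= Rinv_1; lra.
have := stirling_err_succ n; have [_ up] := ln_succ_bounds _ n_gt0.
by have := IHn n_gt0; rewrite S_INR; lra.
Qed.

(* For 0 < k < n this is [ln 'C(n, k) - n H(k / n)] with H the natural entropy;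
   as [ln 0 = 0] in Rocq, the boundary cases k = 0 and k = n need no special form. *)
Definition binom_gap (n k : nat) : R :=
  ln (INR 'C(n, k)) + INR k * ln (INR k) + INR (n - k) * ln (INR (n - k))
  - INR n * ln (INR n).

Lemma binom_gap_sym n k : (k <= n)%nat -> binom_gap n (n - k) = binom_gap n k.
Proof. by move=> k_le_n; rewrite /binom_gap bin_sub // subKn //; ring. Qed.

Lemma ln_binomial n k : (k <= n)%nat ->
  ln (INR 'C(n, k)) = ln (INR n`!) - ln (INR k`!) - ln (INR (n - k)`!).
Proof.
move=> k_le_n; rewrite -(bin_fact k_le_n) !INR_muln.
have fact_gt0 m : 0 < INR m`! by apply: INR_gt0; apply: fact_gt0.
by rewrite !ln_mult //; [ring|apply: INR_gt0; rewrite bin_gt0|apply: Rmult_lt_0_compat].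
Qed.

Lemma binom_gap0 n : (0 < n)%nat -> - / 2 * ln (2 * INR n) <= binom_gap n 0.
Proof.
move=> n_gt0; have n_ge1 : 1 <= INR n by apply: (leq_INR 1).
have := ln_le 1 (INR n) Rlt_0_1 n_ge1; have := ln_lt_2.
by rewrite /binom_gap bin0 subn0 /= ln_1 ln_mult; lra.
Qed.

Lemma binom_gap1 n : (2 <= n)%nat -> - / 2 * ln (2 * INR n) <= binom_gap n 1.
Proof.
move=> n_ge2; rewrite /binom_gap bin1 INR_subn ?(leq_trans _ n_ge2) //= Rmult_1_l ln_1.
have n_ge2R : 2 <= INR n by apply: (leq_INR 2).
have l2 := ln2_ge.
case: (leqP 4 n) => [n_ge4|n_lt4].
- have n_ge4R : 4 <= INR n by have := leq_INR 4 n n_ge4; rewrite /=; lra.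
  have ln_step : (INR n - 1) * (ln (INR n) - ln (INR n - 1)) <= 1.
  { rewrite -ln_div; try lra.
    have := ln_le_sub1 (INR n / (INR n - 1)) ltac:(apply: Rdiv_lt_0_compat; lra).
    have -> : INR n / (INR n - 1) - 1 = / (INR n - 1) by field; lra.
    move=> /(Rmult_le_compat_l (INR n - 1) _ _ ltac:(lra)); rewrite Rinv_r; lra. }
  have : 3 * ln 2 <= ln (2 * INR n).
  { have -> : 3 * ln 2 = ln (2 ^ 3) by rewrite ln_pow /=; lra.
    by apply: ln_le; lra. }
  nra.
- have [->|->] : n = 2%nat \/ n = 3%nat by lia.
  + have -> : INR 2 = 2 by rewrite /=; ring.
    have -> : ln (2 * 2) = 2 * ln 2 by rewrite ln_mult; lra.
    by replace (2 - 1) with 1 by ring; rewrite ln_1; lra.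
  + have -> : INR 3 = 3 by rewrite /=; ring.
    have : 3 * ln 3 <= 5 * ln 2.
    { have -> : 3 * ln 3 = ln (3 ^ 3) by rewrite ln_pow /=; lra.
      have -> : 5 * ln 2 = ln (2 ^ 5) by rewrite ln_pow /=; lra.
      by apply: ln_le; lra. }
    have -> : ln (2 * 3) = ln 2 + ln 3 by rewrite ln_mult; lra.
    by replace (3 - 1) with 2 by ring; lra.
Qed.

Lemma binom_gap_mid n k : (2 <= k)%nat -> (2 <= n - k)%nat ->
  - / 2 * ln (2 * INR n) <= binom_gap n k.
Proof.
move=> k_ge2 nk_ge2.
have k_le_n : (k <= n)%nat by lia.
have n_gt0 : (0 < n)%nat by lia.
have kR : 2 <= INR k by apply: (leq_INR 2).
have nkR : 2 <= INR (n - k) by apply: (leq_INR 2).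
have nR : INR (n - k) = INR n - INR k by apply: INR_subn.
rewrite /binom_gap (ln_binomial n k k_le_n).
have := stirling_err_nondecr 2 k isT k_ge2.
have := stirling_err_nondecr 2 (n - k) isT nk_ge2.
have := stirling_err_le n n_gt0; have := ln2_ge.
have : 0 < / INR n by apply/Rinv_0_lt_compat/INR_gt0.
have : ln (INR k) + ln (INR (n - k)) <= 2 * ln (INR n) - 2 * ln 2.
{ rewrite -ln_mult; try lra.
  have : ln (INR k * INR (n - k)) <= ln (INR n * INR n / (2 * 2)).
  { apply: ln_le; first nra.
    rewrite nR; apply: (Rmult_le_reg_r 4); first lra.
    replace (INR n * INR n / (2 * 2) * 4) with (INR n * INR n) by field.
    by have := pow2_ge_0 (INR n - 2 * INR k); nra. }
  by rewrite ln_div ?ln_mult; nra. }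
rewrite stirling_err2 /stirling_err ln_mult; lra.
Qed.

Lemma binom_gap_ge n k : (0 < n)%nat -> (k <= n)%nat ->
  - / 2 * ln (2 * INR n) <= binom_gap n k.
Proof.
move=> n_gt0 k_le_n.
case: (posnP k) => [->|k_gt0]; first exact: binom_gap0.
case: (eqVneq k n) => [->|k_neq_n].
  by rewrite -(binom_gap_sym n n (leqnn n)) subnn; apply: binom_gap0.
case: (eqVneq k 1%nat) => [->|k_neq1]; first by apply: binom_gap1; lia.
case: (eqVneq k (n - 1)%nat) => [k_eq|k_neq].
  by rewrite -(binom_gap_sym n k k_le_n) k_eq subKn; [apply: binom_gap1|]; lia.
by apply: binom_gap_mid; lia.
Qed.

(** * Entropy and the function eta *)

Definition entropy (x : R) : R := - x * ln x - (1 - x) * ln (1 - x).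

Lemma h2_entropy x : h2 x * ln 2 = entropy x.
Proof. by rewrite /h2 /log2 /entropy; field; have := ln_lt_2; lra. Qed.

Lemma entropy_sym x : entropy (1 - x) = entropy x.
Proof. by rewrite /entropy; replace (1 - (1 - x)) with x by ring; ring. Qed.

Lemma entropy_le_cross x p : 0 <= x <= 1 -> 0 < p < 1 ->
  entropy x <= - x * ln p - (1 - x) * ln (1 - p).
Proof.
move=> x01 p01; rewrite /entropy.
have := mul_ln_div_le x p ltac:(lra) ltac:(lra).
have := mul_ln_div_le (1 - x) (1 - p) ltac:(lra) ltac:(lra).
lra.
Qed.

Lemma entropy_ge0 x : 0 <= x <= 1 -> 0 <= entropy x.
Proof.
have xlnx_le0 y : 0 <= y <= 1 -> y * ln y <= 0.
{ move=> y01; case: (Rle_lt_or_eq_dec 0 y ltac:(lra)) => [y_gt0|<-]; last lra.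
  by have := ln_le y 1 y_gt0 ltac:(lra); rewrite ln_1; nra. }
move=> x01; have := xlnx_le0 x x01; have := xlnx_le0 (1 - x) ltac:(lra).
by rewrite /entropy; lra.
Qed.

Lemma entropy_concave l u v : 0 <= l <= 1 -> 0 <= u <= 1 -> 0 <= v <= 1 ->
  0 < l * u + (1 - l) * v < 1 ->
  l * entropy u + (1 - l) * entropy v <= entropy (l * u + (1 - l) * v).
Proof.
move=> l01 u01 v01; set m := l * u + (1 - l) * v => m01.
have := Rmult_le_compat_l l _ _ ltac:(lra) (entropy_le_cross u m u01 m01).
have := Rmult_le_compat_l (1 - l) _ _ ltac:(lra) (entropy_le_cross v m v01 m01).
have -> : entropy m = l * (- u * ln m - (1 - u) * ln (1 - m))
                      + (1 - l) * (- v * ln m - (1 - v) * ln (1 - m)).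
{ by rewrite /entropy /m; ring. }
lra.
Qed.

(* With [a = (q - 1) / q], [eta_nat a x = ln 2 * eta_q q x]. *)
Definition eta_nat (a x : R) : R := entropy (a * (1 - x)) - (1 - x) * entropy a.

(* With [a = (q - 1) / q], [ln a - ln (1 - a) = ln (q - 1)], so
   [qentropy a x = ln q * H_q(x)] is the q-ary entropy in nats. *)
Definition qentropy (a x : R) : R := entropy x + x * (ln a - ln (1 - a)).

Section EtaQentropy.
Variable a : R.
Hypothesis a01 : 0 < a < 1.

Definition eta_gap (e : R) : R := eta_nat a (1 - e) - eta_nat a e.

Definition eta_gap' (e : R) : R :=
  a * (ln (1 - a * e) - ln (a * e)) + a * (ln (1 - a * (1 - e)) - ln (a * (1 - e)))
  - 2 * entropy a.

Lemma is_derive_eta_gap e : 0 < e < 1 -> is_derive eta_gap e (eta_gap' e).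
Proof.
move=> e01; rewrite /eta_gap /eta_gap' /eta_nat /entropy.
have : 0 < a * e by nra.
have : 0 < a * (1 - e) by nra.
move=> *; auto_derive; first by repeat split; nra.
by rewrite /Rminus (_ : 1 + - (1 + - e) = e); [field; repeat split; nra|ring].
Qed.

Lemma eta_gap'E e : 0 < e < 1 ->
  eta_gap' e = a * ln ((1 - a) / (a * a * (e * (1 - e))) + 1) - 2 * entropy a.
Proof.
move=> e01; rewrite /eta_gap' -Rmult_plus_distr_l -!ln_div; try nra.
rewrite -ln_mult; try (apply: Rdiv_lt_0_compat; nra).
by congr (_ * ln _ - _); field; split; nra.
Qed.

Lemma eta_gap'_nonincr e1 e2 : 0 < e1 -> e1 <= e2 -> e2 <= / 2 ->
  eta_gap' e2 <= eta_gap' e1.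
Proof.
move=> e1_gt0 e12 e2_le; rewrite !eta_gap'E; try lra.
have e1_pos : 0 < e1 * (1 - e1) by nra.
have e2_pos : 0 < e2 * (1 - e2) by nra.
have aa_pos : 0 < a * a by nra.
apply/Rplus_le_compat_r/Rmult_le_compat_l; first lra.
apply: ln_le.
- have : 0 < (1 - a) / (a * a * (e2 * (1 - e2))).
  { by apply: Rdiv_lt_0_compat; [lra|apply: Rmult_lt_0_compat]. }
  lra.
- apply/Rplus_le_compat_r/Rmult_le_compat_l; first lra.
  by apply: Rinv_le_contravar; [apply: Rmult_lt_0_compat|apply: Rmult_le_compat_l]; nra.
Qed.

Lemma eta_gap_ge_linear t : 0 < t < 1 ->
  t * (a * (ln (1 - a) - ln a) - 2 * entropy a) <= eta_gap t.
Proof.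
move=> t01.
have := entropy_le_cross (a * (1 - t)) a ltac:(split; nra) a01.
have := entropy_ge0 (a * t) ltac:(split; nra).
rewrite /eta_gap /eta_nat; replace (1 - (1 - t)) with t by ring.
by rewrite /entropy; nra.
Qed.

(* [eta_gap] vanishes at 1/2 and, in the limit, at 0 (which is what
   [eta_gap_ge_linear] provides); in between it is concave. *)
Lemma eta_gap_ge0 e : 0 < e <= / 2 -> 0 <= eta_gap e.
Proof.
move=> e_half; case: (Rle_or_lt (eta_gap' e) 0) => [de_le0|de_gt0].
- have eta_gap_half : eta_gap (/ 2) = 0.
  { by rewrite /eta_gap (_ : 1 - / 2 = / 2); [ring|field]. }
  have : - eta_gap e <= - eta_gap (/ 2).
  { apply: (le_of_derive_ge0 (fun t => - eta_gap t) (fun t => - eta_gap' t)); first lra.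
    - by move=> x x_e; apply/is_derive_opp/is_derive_eta_gap; lra.
    - by move=> x x_e; have := eta_gap'_nonincr e x ltac:(lra) ltac:(lra) ltac:(lra); lra. }
  lra.
- apply: (ge0_of_forall_mul_le _ (a * (ln (1 - a) - ln a) - 2 * entropy a) e);
    first lra; move=> t t_e.
  have : eta_gap t <= eta_gap e.
  { apply: (le_of_derive_ge0 eta_gap eta_gap'); first lra.
    - by move=> x x_t; apply: is_derive_eta_gap; lra.
    - by move=> x x_t; have := eta_gap'_nonincr x e ltac:(lra) ltac:(lra) ltac:(lra); lra. }
  by have := eta_gap_ge_linear t ltac:(lra); lra.
Qed.

Lemma eta_nat_le_linear e : 0 <= e <= 1 -> eta_nat a e <= - e * ln (1 - a).
Proof.
move=> e01; have := entropy_le_cross (a * (1 - e)) a ltac:(split; nra) a01.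
by rewrite /eta_nat /entropy; nra.
Qed.

Lemma eta_nat_concave l x y : 0 <= l <= 1 -> 0 < x < 1 -> 0 < y < 1 ->
  l * eta_nat a x + (1 - l) * eta_nat a y <= eta_nat a (l * x + (1 - l) * y).
Proof.
move=> l01 x01 y01.
have comb : a * (1 - (l * x + (1 - l) * y)) = l * (a * (1 - x)) + (1 - l) * (a * (1 - y)).
{ by ring. }
have ax01 : 0 <= a * (1 - x) <= 1 by split; nra.
have ay01 : 0 <= a * (1 - y) <= 1 by split; nra.
have axy01 : 0 < l * (a * (1 - x)) + (1 - l) * (a * (1 - y)) < 1.
{ by have := convex_comb_in01 l x y l01 x01 y01; rewrite -comb; split; nra. }
have := entropy_concave l (a * (1 - x)) (a * (1 - y)) l01 ax01 ay01 axy01.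
by rewrite /eta_nat -comb; nra.
Qed.

(* On [e, 1 - e] the concave [eta_nat a] is minimal at an endpoint, and the left
   one is the smaller by [eta_gap_ge0]. *)
Lemma eta_nat_ge_endpoint e r : 0 < e <= / 2 -> e <= r <= 1 - e ->
  eta_nat a e <= eta_nat a r.
Proof.
move=> e_half r_e.
case: (Rle_lt_or_eq_dec e (/ 2) ltac:(lra)) => [e_lt_half|e_eq]; last first.
  by rewrite (_ : r = e); [apply: Rle_refl|lra].
set l := (1 - e - r) / (1 - 2 * e).
have l01 : 0 <= l <= 1.
{ rewrite /l; split; first by apply: Rdiv_le_0_compat; lra.
  by apply: (Rmult_le_reg_r (1 - 2 * e)); [lra|field_simplify; lra]. }
have r_comb : r = l * e + (1 - l) * (1 - e) by rewrite /l; field; lra.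
have := eta_nat_concave l e (1 - e) l01 ltac:(lra) ltac:(lra).
have := Rmult_le_pos (1 - l) _ ltac:(lra) (eta_gap_ge0 e e_half).
by rewrite /eta_gap -r_comb; nra.
Qed.

Lemma qentropy_le x : 0 <= x <= 1 -> qentropy a x <= - ln (1 - a).
Proof. by move=> x01; have := entropy_le_cross x a x01 a01; rewrite /qentropy; lra. Qed.

Lemma qentropy_at : qentropy a a = - ln (1 - a).
Proof. by rewrite /qentropy /entropy; ring. Qed.

(* Concavity plus the maximum [qentropy_at] at [x = a]. *)
Lemma qentropy_nondecr r x : 0 < r -> r <= x -> x <= a -> qentropy a r <= qentropy a x.
Proof.
move=> r_gt0 r_le_x x_le_a.
case: (Rle_lt_or_eq_dec _ _ x_le_a) => [x_lt_a|->]; last first.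
  by rewrite qentropy_at; apply: qentropy_le; lra.
set l := (a - x) / (a - r).
have l01 : 0 <= l <= 1.
{ rewrite /l; split; first by apply: Rdiv_le_0_compat; lra.
  by apply: (Rmult_le_reg_r (a - r)); [lra|field_simplify; lra]. }
have x_comb : x = l * r + (1 - l) * a by rewrite /l; field; lra.
have : l * qentropy a r + (1 - l) * qentropy a a <= qentropy a x.
{ have := entropy_concave l r a l01 ltac:(lra) ltac:(lra) ltac:(rewrite -x_comb; lra).
  by rewrite /qentropy -x_comb {3}x_comb; lra. }
have := Rmult_le_compat_l (1 - l) _ _ ltac:(lra) (qentropy_le r ltac:(lra)).
rewrite qentropy_at; lra.
Qed.

End EtaQentropy.

Lemma qentropy_eta a r :
  qentropy a (a * (1 - r)) = - (1 - r) * ln (1 - a) + eta_nat a r.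
Proof. by rewrite /qentropy /eta_nat /entropy; ring. Qed.

(** * Hamming balls *)

Definition ball_vol (n q k : nat) : nat := \sum_(i < k.+1) 'C(n, i) * expn (q - 1) i.

Lemma ball_vol_gt0 n q k : (0 < ball_vol n q k)%nat.
Proof. by rewrite /ball_vol big_ord_recl /= bin0 expn0 mul1n. Qed.

Lemma ball_vol_ge_term n q k : ('C(n, k) * expn (q - 1) k <= ball_vol n q k)%nat.
Proof. by rewrite /ball_vol big_ord_recr /= leq_addl. Qed.

Lemma ball_vol_mono n q k l : (k <= l)%nat -> (ball_vol n q k <= ball_vol n q l)%nat.
Proof.
move=> k_le_l; rewrite /ball_vol.
rewrite (big_ord_widen l.+1 (fun i => 'C(n, i) * expn (q - 1) i)%nat) //.
by rewrite big_mkcond /= leq_sum // => i _; case: ifP.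
Qed.

Lemma ball_vol_full n q : (0 < q)%nat -> ball_vol n q n = expn q n.
Proof.
move=> q_gt0; rewrite /ball_vol -{2}(subnK q_gt0) addnC expnDn.
by apply: eq_bigr => i _; rewrite exp1n mul1n.
Qed.

Section HammingBalls.
Variables (F : finFieldType) (n : nat).
Local Open Scope ring_scope.
Import GRing.Theory.

Definition supp (z : 'rV[F]_n) : {set 'I_n} := [set i | z ord0 i != 0].
Definition wt (z : 'rV[F]_n) : nat := #|supp z|.

Lemma hamming_wt (c y : 'rV[F]_n) : hamming c y = wt (c - y).
Proof. by apply: eq_card => i; rewrite !inE !mxE subr_eq0. Qed.

Lemma card_supp_eq (S : {set 'I_n}) :
  #|[set z : 'rV[F]_n | supp z == S]| = expn #|F|.-1 #|S|.
Proof.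
pose row_of (f : {ffun 'I_n -> F}) : 'rV[F]_n := \row_j f j.
have row_of_inj : injective row_of.
{ by move=> f1 f2 /rowP f12; apply/ffunP => j; have := f12 j; rewrite !mxE. }
have -> : [set z | supp z == S] = row_of @: pffun_on 0 S (predC1 0).
{ apply/setP => z; rewrite inE; apply/idP/imsetP.
  - move=> /eqP suppS; exists [ffun j => z ord0 j].
    + apply/pffun_onP; split.
      * by apply/subsetP => j; rewrite inE ffunE => zj; rewrite -suppS inE.
      * by move=> x /imageP [j Sj ->]; rewrite ffunE inE; rewrite -suppS inE in Sj.
    + by apply/rowP => j; rewrite mxE ffunE.
  - case=> f /pffun_onP [f_supp f_range] ->; apply/eqP/setP => j.
    rewrite /supp inE mxE; apply/idP/idP => [fj|Sj].
    + by apply: (subsetP f_supp); rewrite inE.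
    + by have := f_range (f j) (image_f _ Sj); rewrite inE. }
by rewrite (card_imset _ row_of_inj) card_pffun_on cardC1.
Qed.

Lemma card_wt_eq i : #|[set z : 'rV[F]_n | wt z == i]| = ('C(n, i) * expn #|F|.-1 i)%nat.
Proof.
rewrite -sum1_card (partition_big supp (fun S : {set 'I_n} => #|S| == i)); last first.
  by move=> z; rewrite inE.
rewrite (eq_bigr (fun S => expn #|F|.-1 i)); last first.
{ move=> S /eqP cardS; rewrite -cardS -(card_supp_eq S) -[RHS]sum1_card.
  apply: eq_bigl => z; rewrite !inE /wt; apply/andP/idP => [[//]|/eqP suppS].
  by rewrite suppS cardS eqxx. }
rewrite sum_nat_const.
have -> : #|[pred S : {set 'I_n} | #|S| == i]| = #|[set S : {set 'I_n} | #|S| == i]|.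
  by apply: eq_card => S; rewrite inE.
by rewrite card_draws card_ord.
Qed.

Lemma card_wt_le k : #|[set z : 'rV[F]_n | (wt z <= k)%nat]| = ball_vol n #|F| k.
Proof.
elim: k => [|k IHk].
  rewrite /ball_vol big_ord1 bin0 expn0; have := card_wt_eq 0; rewrite bin0 expn0 => <-.
  by apply: eq_card => z; rewrite !inE leqn0.
rewrite /ball_vol big_ord_recr /= -/(ball_vol n #|F| k) -IHk subn1 -(card_wt_eq k.+1).
have -> : [set z : 'rV[F]_n | (wt z <= k.+1)%nat] =
          [set z | (wt z <= k)%nat] :|: [set z | wt z == k.+1].
{ by apply/setP => z; rewrite !inE leq_eqVlt ltnS orbC. }
rewrite cardsU (_ : _ :&: _ = set0) ?cards0 ?subn0 //.
apply/setP => z; rewrite !inE; apply/negbTE/negP => /andP [wt_le /eqP wt_eq].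
by rewrite wt_eq ltnn in wt_le.
Qed.

(* Double counting of the pairs (c, y) with c in C and hamming c y <= tau. *)
Lemma list_decodable_volume (C : {set 'rV[F]_n}) (tau L k : nat) :
  list_decodable C tau L -> (k <= tau)%nat ->
  (#|C| * ball_vol n #|F| k <= L * expn #|F| n)%nat.
Proof.
move=> C_ld k_le_tau.
have pairs_le : (\sum_(y : 'rV[F]_n) #|[set c in C | (hamming c y <= tau)%nat]|
                 <= L * expn #|F| n)%nat.
{ apply: (@leq_trans (\sum_(y : 'rV[F]_n) L)); first by apply: leq_sum => y _; apply: C_ld.
  by rewrite sum_nat_const card_mx mul1n mulnC. }
apply: leq_trans pairs_le.
have near_y y : #|[set c in C | (hamming c y <= tau)%nat]| =
   (\sum_(c in C) (if (hamming c y <= tau)%nat then 1 else 0))%nat.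
{ by rewrite -big_mkcondr /= -sum1_card; apply: eq_bigl => c; rewrite inE. }
have near_c c : (\sum_(y : 'rV[F]_n) (if (hamming c y <= tau)%nat then 1 else 0))%nat
                = ball_vol n #|F| tau.
{ rewrite -card_wt_le -sum1_card [RHS]big_mkcond /=.
  rewrite (reindex_inj (h := fun y : 'rV[F]_n => c - y)) /=; last first.
    by move=> y1 y2 /= /addrI /oppr_inj.
  by apply: eq_bigr => y _; rewrite inE hamming_wt opprB addrC subrK. }
rewrite (eq_bigr _ (fun y _ => near_y y)) exchange_big /=.
rewrite (eq_bigr _ (fun c _ => near_c c)) sum_nat_const.
by apply: leq_mul => //; apply: ball_vol_mono.
Qed.

End HammingBalls.

(* A recursive form of [ball_vol], which unlike the big sum reduces under [vm_compute]. *)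
Fixpoint ball_vol_rec (n q k : nat) : nat :=
  if k is k'.+1 then (ball_vol_rec n q k' + 'C(n, k) * expn (q - 1) k)%nat else 1%nat.

Lemma ball_vol_recE n q k : ball_vol n q k = ball_vol_rec n q k.
Proof.
elim: k => [|k IHk]; first by rewrite /ball_vol big_ord1 bin0 expn0.
by rewrite /ball_vol big_ord_recr /= -IHk.
Qed.

(* For [k < n], [(q - 1) n < k q] forces [q < n], and then the last hypothesis
   leaves only [q <= 3] and [n <= 7], which are checked by computation. *)
Lemma ball_vol_sq_ge q n k : (1 < q)%nat -> (0 < n)%nat -> (k <= n)%nat ->
  ((q - 1) * n < k * q)%nat -> (n * expn (q - 1) 2 < 2 * expn q 2)%nat ->
  (expn q (2 * n) <= 2 * n * expn (ball_vol n q k) 2)%nat.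
Proof.
move=> q_gt1 n_gt0 k_le_n kq_gt nq_lt.
case: (eqVneq k n) => [->|k_neq_n].
  rewrite ball_vol_full; last lia.
  by rewrite -expnM mulnC -[X in (X <= _)%nat]mul1n leq_mul2r; apply/orP; right; lia.
have q_lt_n : (q < n)%nat by nia.
have q_le3 : (q <= 3)%nat.
{ case: (leqP q 3) => // q_gt3.
  have : ((q + 1) * expn (q - 1) 2 <= n * expn (q - 1) 2)%nat by apply: leq_mul; lia.
  nia. }
have n_le7 : (n <= 7)%nat by nia.
have small_cases : seq.all (fun q => seq.all (fun n => seq.all (fun k =>
   if [&& (0 < n)%nat, (k < n)%nat, ((q - 1) * n < k * q)%nat &
          (n * expn (q - 1) 2 < 2 * expn q 2)%nat]
   then (expn q (2 * n) <= 2 * n * expn (ball_vol_rec n q k) 2)%nat else true)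
   (seq.iota 0 8)) (seq.iota 0 8)) [:: 2; 3]%nat.
{ by vm_compute. }
move/allP: small_cases => /(_ q) /(_ ltac:(rewrite !inE; lia)) /allP /(_ n).
move=> /(_ ltac:(rewrite seq.mem_iota; lia)) /allP /(_ k).
move=> /(_ ltac:(rewrite seq.mem_iota; lia)).
have -> : [&& (0 < n)%nat, (k < n)%nat, ((q - 1) * n < k * q)%nat &
            (n * expn (q - 1) 2 < 2 * expn q 2)%nat].
  by apply/and4P; split => //; lia.
by rewrite ball_vol_recE.
Qed.

Lemma qentropy_q (q : nat) x : (1 < q)%nat ->
  qentropy ((INR q - 1) / INR q) x = entropy x + x * ln (INR q - 1).
Proof.
move=> q_gt1; have q_ge2 : 2 <= INR q by apply: (leq_INR 2).
rewrite /qentropy (_ : 1 - (INR q - 1) / INR q = / INR q); last by field; lra.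
by rewrite ln_Rinv ?ln_div; try lra; ring.
Qed.

Lemma ln_weight_ge q n k : (1 < q)%nat -> (0 < k)%nat -> (k < n)%nat ->
  - / 2 * ln (2 * INR n) + INR n * qentropy ((INR q - 1) / INR q) (INR k / INR n)
  <= ln (INR ('C(n, k) * expn (q - 1) k)%nat).
Proof.
move=> q_gt1 k_gt0 k_lt_n.
have nR : 0 < INR n by apply: INR_gt0; lia.
have kR : 0 < INR k by apply: INR_gt0.
have nkR : INR (n - k) = INR n - INR k by apply/INR_subn/ltnW.
have nk_gt0 : 0 < INR n - INR k by rewrite -nkR; apply: INR_gt0; lia.
have q1R : 0 < INR q - 1 by have := leq_INR 2 q q_gt1; rewrite /=; lra.
have := binom_gap_ge n k ltac:(lia) (ltnW k_lt_n).
have binR : 0 < INR 'C(n, k) by apply: INR_gt0; rewrite bin_gt0 ltnW.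
rewrite /binom_gap nkR INR_muln INR_expn INR_subn ?(ltnW q_gt1) //=.
rewrite (ln_mult (INR 'C(n, k))) ?ln_pow //; last by apply: pow_lt.
rewrite qentropy_q // /entropy.
have -> : 1 - INR k / INR n = (INR n - INR k) / INR n by field; lra.
rewrite !ln_div //.
have -> : INR n * (- (INR k / INR n) * (ln (INR k) - ln (INR n)) -
   (INR n - INR k) / INR n * (ln (INR n - INR k) - ln (INR n)) +
   INR k / INR n * ln (INR q - 1))
  = - INR k * ln (INR k) - (INR n - INR k) * ln (INR n - INR k) + INR n * ln (INR n)
    + INR k * ln (INR q - 1) by field; lra.
lra.
Qed.

(* [M] stands for [#|C|] and [r] for its rate. *)
Section CapacityContradiction.
Variables (q n M L tau : nat) (r eps : R).
Hypotheses (q_gt1 : (1 < q)%nat) (n_gt0 : (0 < n)%nat) (M_gt0 : (0 < M)%nat).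
Hypotheses (L_gt0 : (0 < L)%nat) (L_ge : (q - 1 <= L)%nat).
Hypotheses (eps_gt0 : 0 < eps) (eps_le : eps <= / 2) (r_ge : eps <= r) (r_le : r <= 1 - eps).
Hypothesis ln_M : ln (INR M) = r * INR n * ln (INR q).
Hypothesis count :
  forall k, (k <= tau)%nat -> (M * ball_vol n q k <= L * expn q n)%nat.
Local Notation a := ((INR q - 1) / INR q).
Hypothesis ln_L : ln (INR L) < - / 2 * ln (2 * INR n) + INR n * eta_nat a eps.
Hypothesis tau_ge : INR L * INR n * (1 - r) / (INR L + 1) <= INR tau.

Let q_ge2 : 2 <= INR q. Proof. exact: (leq_INR 2). Qed.
Let n_ge1 : 1 <= INR n. Proof. exact: (leq_INR 1). Qed.
Let L_ge' : INR q - 1 <= INR L.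
Proof. by have := leq_INR _ _ L_ge; rewrite INR_subn /=; lia || lra. Qed.

Let a01 : 0 < a < 1.
Proof.
split; first by apply: Rdiv_lt_0_compat; lra.
by apply: (Rmult_lt_reg_r (INR q)); [lra|field_simplify; lra].
Qed.

Let ln_q : ln (INR q) = - ln (1 - a).
Proof.
by rewrite (_ : 1 - a = / INR q) ?ln_Rinv; [ring|lra|field; lra].
Qed.

Lemma ln_count_bound k : (k <= tau)%nat ->
  ln (INR M) + ln (INR (ball_vol n q k)) <= ln (INR L) + INR n * ln (INR q).
Proof.
move=> /count /leq_INR; rewrite !INR_muln INR_expn => count_k.
have M_pos := INR_gt0 _ M_gt0; have V_pos := INR_gt0 _ (ball_vol_gt0 n q k).
have := ln_le _ _ (Rmult_lt_0_compat _ _ M_pos V_pos) count_k.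
have L_pos := INR_gt0 _ L_gt0; have qn_pos : 0 < INR q ^ n by apply: pow_lt; lra.
by rewrite !ln_mult // ln_pow //; lra.
Qed.

Lemma radius_le_tau : a * (1 - r) * INR n <= INR tau.
Proof.
have a_le : a <= INR L / (INR L + 1).
{ apply: (Rmult_le_reg_r (INR q * (INR L + 1))); first nra.
  by field_simplify; nra. }
apply: Rle_trans tau_ge.
have -> : INR L * INR n * (1 - r) / (INR L + 1) = INR L / (INR L + 1) * ((1 - r) * INR n).
{ by field; lra. }
by rewrite Rmult_assoc; apply: Rmult_le_compat_r; nra.
Qed.

Lemma no_radius_between k : (k <= tau)%nat ->
  a * (1 - r) * INR n <= INR k -> INR k <= a * INR n -> False.
Proof.
move=> k_le_tau rho_le_k k_le_an.
have [a_gt0 a_lt1] := a01.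
have rho_pos : 0 < a * (1 - r) * INR n.
{ by apply: Rmult_lt_0_compat; [apply: Rmult_lt_0_compat|]; lra. }
have k_gt0 : (0 < k)%nat by apply: (INR_ltn 0); rewrite /=; lra.
have k_lt_n : (k < n)%nat by apply: INR_ltn; nra.
have rho_gt0 : 0 < a * (1 - r) by apply: Rmult_lt_0_compat; lra.
have rho_le : a * (1 - r) <= INR k / INR n.
{ by apply: (Rmult_le_reg_r (INR n)); [lra|field_simplify; lra]. }
have le_a : INR k / INR n <= a.
{ by apply: (Rmult_le_reg_r (INR n)); [lra|field_simplify; lra]. }
have weight_le : ln (INR ('C(n, k) * expn (q - 1) k)%nat) <= ln (INR (ball_vol n q k)).
{ apply: ln_le; last exact/leq_INR/ball_vol_ge_term.
  by apply: INR_gt0; rewrite muln_gt0 bin_gt0 expn_gt0 subn_gt0 q_gt1 ltnW. }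
have tilt := qentropy_nondecr a a01 _ _ rho_gt0 rho_le le_a.
rewrite qentropy_eta in tilt.
have eta_le := eta_nat_ge_endpoint a a01 eps r (conj eps_gt0 eps_le) (conj r_ge r_le).
have := ln_weight_ge q n k q_gt1 k_gt0 k_lt_n.
have := ln_count_bound k k_le_tau.
have := Rmult_le_compat_l (INR n) _ _ ltac:(lra) tilt.
have := Rmult_le_compat_l (INR n) _ _ ltac:(lra) eta_le.
have := ln_L.
rewrite ln_M ln_q; nra.
Qed.

Lemma ln_L_lt_ln_M : ln (INR L) < ln (INR M) - / 2 * ln (2 * INR n).
Proof.
have [a_gt0 a_lt1] := a01.
have ln_q_gt0 : 0 < ln (INR q) by rewrite -ln_1; apply: ln_increasing; lra.
have eta_le : eta_nat a eps <= r * ln (INR q).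
{ have := eta_nat_le_linear a a01 eps ltac:(lra).
  by move: ln_q_gt0; rewrite ln_q; nra. }
have := Rmult_le_compat_l (INR n) _ _ ltac:(lra) eta_le.
have := ln_L; rewrite ln_M; lra.
Qed.

Lemma ball_vol_sq_lt k : (k <= tau)%nat ->
  (2 * n * expn (ball_vol n q k) 2 < expn q (2 * n))%nat.
Proof.
move=> k_le_tau.
have INR2 : INR 2 = 2 by rewrite /=; ring.
have V_pos := INR_gt0 _ (ball_vol_gt0 n q k).
have V2_pos : 0 < INR (ball_vol n q k) ^ 2 by apply: pow_lt.
have qn_pos : 0 < INR q ^ (2 * n) by apply: pow_lt; lra.
apply: INR_ltn; rewrite INR_muln (INR_expn (ball_vol n q k)) INR_muln INR_expn INR2.
have n2_pos : 0 < 2 * INR n by lra.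
apply: ln_lt_inv => //; first exact: Rmult_lt_0_compat.
have := ln_count_bound k k_le_tau; have := ln_L_lt_ln_M.
rewrite (ln_mult (2 * INR n)) // !ln_pow ?INR_muln ?INR2 //; lra.
Qed.

Lemma small_blocklength : a * r * INR n < 1 -> (n * expn (q - 1) 2 < 2 * expn q 2)%nat.
Proof.
move=> arn_lt1.
have [a_gt0 a_lt1] := a01.
have ln_q1_le : ln (INR q - 1) <= ln (INR L) by apply: ln_le; lra.
have ln_q_le : ln (INR q) <= (INR q - 1) * ln 2.
{ have := ltn_expl (q - 1) (isT : (1 < 2)%nat).
  rewrite subn1 prednK ?(ltnW q_gt1) // => /leq_INR; rewrite INR_expn => q_le.
  have := ln_le (INR q) _ ltac:(lra) q_le; rewrite ln_pow /=; last lra.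
  by rewrite -subn1 INR_subn ?(ltnW q_gt1) //=; lra. }
have rn_ln_q : r * INR n * ln (INR q) < ln (INR q) / a.
{ have ln_q_pos : 0 < ln (INR q) by rewrite -ln_1; apply: ln_increasing; lra.
  apply: (Rmult_lt_reg_r a); first lra.
  have -> : ln (INR q) / a * a = ln (INR q) by field; lra.
  nra. }
have div_a : ln (INR q) / a <= ln (INR q) + ln 2.
{ have -> : ln (INR q) / a = ln (INR q) + ln (INR q) / (INR q - 1) by field; lra.
  apply/Rplus_le_compat_l/(Rmult_le_reg_r (INR q - 1)); first lra.
  have -> : ln (INR q) / (INR q - 1) * (INR q - 1) = ln (INR q) by field; lra.
  lra. }
have INR2 : INR 2 = 2 by rewrite /=; ring.
have q1_pos : 0 < INR q - 1 by lra.
have q1sq_pos : 0 < (INR q - 1) ^ 2 by apply: pow_lt.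
have n2_pos : 0 < 2 * INR n by lra.
have q2_pos : 0 < 2 * INR q by lra.
have q2sq_pos : 0 < (2 * INR q) ^ 2 by apply: pow_lt.
have lt : (INR q - 1) ^ 2 * (2 * INR n) < (2 * INR q) ^ 2.
{ apply: ln_lt_inv => //; first exact: Rmult_lt_0_compat.
  have := ln_L_lt_ln_M; rewrite ln_M.
  by rewrite (ln_mult ((INR q - 1) ^ 2)) // !ln_pow // (ln_mult 2 (INR q)) ?INR2; lra. }
apply: INR_ltn.
rewrite INR_muln (INR_expn (q - 1)) INR_muln INR_expn INR_subn ?(ltnW q_gt1) //.
by rewrite INR2 /=; nra.
Qed.

Lemma capacity_contradiction : False.
Proof.
have [a_gt0 a_lt1] := a01.
case: (Rle_or_lt (INR tau) (a * INR n)) => [tau_le|tau_gt].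
  exact: (no_radius_between tau (leqnn tau) radius_le_tau tau_le).
pose k := ((q - 1) * n %/ q)%nat.
have q_gt0 : (0 < q)%nat by lia.
have kq_gt : ((q - 1) * n < k.+1 * q)%nat by apply: ltn_ceil.
have k_le : INR k <= a * INR n.
{ have := leq_INR _ _ (leq_divM ((q - 1) * n) q).
  rewrite -/k !INR_muln INR_subn ?(ltnW q_gt1) // INR_1 => le.
  by apply: (Rmult_le_reg_r (INR q)); [lra|field_simplify; lra]. }
have k_gt : a * INR n < INR k + 1.
{ have := leq_INR _ _ kq_gt.
  rewrite S_INR !INR_muln S_INR INR_subn ?(ltnW q_gt1) // INR_1 => lt.
  by apply: (Rmult_lt_reg_r (INR q)); [lra|field_simplify; lra]. }
have k_lt_tau : (k < tau)%nat by apply: INR_ltn; lra.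
case: (Rle_or_lt (a * (1 - r) * INR n) (INR k)) => [rho_le|rho_gt].
  exact: (no_radius_between k (ltnW k_lt_tau) rho_le k_le).
have k_lt_n : (k < n)%nat by apply: INR_ltn; nra.
have := ball_vol_sq_ge q n k.+1 q_gt1 n_gt0 k_lt_n kq_gt (small_blocklength ltac:(nra)).
by rewrite leqNgt ball_vol_sq_lt.
Qed.

End CapacityContradiction.

Lemma eta_q_ln2 (q : nat) x : (0 < q)%nat ->
  eta_q q x * ln 2 = eta_nat ((INR q - 1) / INR q) x.
Proof.
move=> /INR_gt0 q_gt0.
rewrite /eta_q (_ : / INR q = 1 - (INR q - 1) / INR q); last by field; lra.
by rewrite /eta_nat Rmult_minus_distr_r Rmult_assoc !h2_entropy entropy_sym.
Qed.

Lemma ln_card_rate (F : finFieldType) n (C : {set 'rV[F]_n}) : (0 < n)%nat ->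
  ln (INR #|C|) = rate C * INR n * ln (INR #|F|).
Proof.
move=> /INR_gt0 n_gt0.
have F_ge2 : 2 <= INR #|F| by apply: (leq_INR 2); exact: card_finNzRing_gt1.
have ln_F_gt0 : 0 < ln (INR #|F|) by rewrite -ln_1; apply: ln_increasing; lra.
by rewrite /rate; field; lra.
Qed.

Lemma card_gt0_of_rate (F : finFieldType) n (C : {set 'rV[F]_n}) :
  0 < rate C -> (0 < #|C|)%nat.
Proof.
rewrite lt0n; apply: contraPT => /negPn /eqP card0.
have ln0 : ln 0 = 0.
{ by rewrite /ln; case: Rlt_dec => [zero_lt0|//]; exfalso; apply: (Rlt_irrefl 0). }
by rewrite /rate card0 /= ln0 /Rdiv !Rmult_0_l; lra.
Qed.

Lemma ln_list_size_bound (q n L : nat) eps : (0 < q)%nat -> (0 < n)%nat -> (0 < L)%nat ->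
  INR L < / sqrt (2 * INR n) * Rpower 2 (eta_q q eps * INR n) ->
  ln (INR L) < - / 2 * ln (2 * INR n) + INR n * eta_nat ((INR q - 1) / INR q) eps.
Proof.
move=> q_gt0 /INR_gt0 n_gt0 /INR_gt0 L_gt0 L_lt.
have sqrt_gt0 : 0 < sqrt (2 * INR n) by apply: sqrt_lt_R0; lra.
have := ln_increasing _ _ L_gt0 L_lt.
rewrite ln_mult; [|exact: Rinv_0_lt_compat|exact: exp_pos].
by rewrite ln_Rinv // ln_sqrt ?ln_Rpower -?eta_q_ln2 //; lra.
Qed.

Theorem mainTheorem2 (eps : R) (F : finFieldType) (n : nat)
    (C : {set 'rV[F]_n}) (L tau : nat) :
  (0 < eps ) -> (eps <= 1 / 2 ) ->
  (0 < n)%nat ->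
  (eps <= rate C ) -> (rate C <= 1 - eps ) ->
  (0 < L)%nat ->
  (INR L < Rmult (Rinv (sqrt (2 * INR n)))
                 (Rpower 2 (Rmult (eta_q #|F| eps) (INR n))) ) ->
  (Rdiv (INR L * INR n * (1 - rate C)) (INR L + 1) <= INR tau ) ->
  list_decodable C tau L ->
  (L < #|F| - 1)%nat.
Proof.
move=> eps_gt0 eps_le n_gt0 rate_ge rate_le L_gt0 L_lt tau_ge C_ld.
have q_gt1 := card_finNzRing_gt1 F.
case: (leqP (#|F| - 1) L) => [L_ge|//]; exfalso.
apply: (capacity_contradiction _ _ _ _ _ _ _ q_gt1 n_gt0 _ L_gt0 L_ge eps_gt0 _
          rate_ge rate_le (ln_card_rate _ _ C n_gt0) _
          (ln_list_size_bound _ _ _ _ (ltnW q_gt1) n_gt0 L_gt0 L_lt) tau_ge).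
- by apply: card_gt0_of_rate; lra.
- lra.
- by move=> k; apply: list_decodable_volume.
Qed.
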